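(* Let $L$ be a factorial $W^*$-lattice of type $I_n$. Then (a) for every $l\in L$, $\bigvee_{m\in Min(l)}m=l$; (b) for all $l,l'\in L$, $l\le l'$ if and only if $Min(l)\subseteq Min(l')$.
   Context: Orthocomplemented lattice (paper's convention): a set $L$ with a partial order $\le$ in which every subset has a supremum and an infimum ($l\vee l'$, $l\wedge l'$ denote binary sup/inf, $0=\inf L$, $1=\sup L$), such that: (continuity) for every increasing net $(l_i)$ and every $l$, $\bigvee_i(l\wedge l_i)=l\wedge\bigvee_i l_i$, and for every decreasing net $(l_i)$ and every $l$, $\bigwedge_i(l\vee l_i)=l\vee\bigwedge_i l_i$; (modularity) $l\le l''$ implies $(l\vee l')\wedge l''=l\vee(l'\wedge l'')$ for all $l'$; together with a map $l\mapsto l^\perp$, also written $1-l$, satisfying $l^{\perp\perp}=l$, $l\vee l^\perp=1$, $l\wedge l^\perp=0$, and $l\le l'\Rightarrow l'^\perp\le l^\perp$. For $l'\le l$ put $l-l'=(1-l')\wedge l$. Write $\perp(l)=\{l'\in L: l'\le 1-l\}$; elements of $\perp(l)$ are orthogonal to $l$; a family is mutually orthogonal if any two distinct members are orthogonal. $l$ commutes with $l'$ if $l=(l\wedge l')\vee(l\wedge l'^\perp)$; $c(l)$ is the set of elements commuting with $l$; $C(L)=\bigcap_{l\in L}c(l)$. $L$ is factorial if $C(L)=\{0,1\}$ and abelian if $C(L)=L$. For $l\in L$, $L\wedge l=\{l'\in L:l'\le l\}$ is an orthocomplemented lattice with complement $l'\mapsto l-l'$; $l$ is an abelian element if $L\wedge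 l$ is abelian. $L$ is an R-lattice if $C(L\wedge l)=\{c\wedge l: c\in C(L)\}$ for every $l\in L$. An element $l\ne 0$ is minimal if for every $l'\in L$ either $l\wedge l'=0$ or $l\wedge l'=l$; $Min(L)$ is the set of minimal elements and $Min(l)=\{m\in Min(L): m\le l\}$. Regular equivalence relation: for an equivalence relation $\sim$ on $L$ write $l\le_\sim l'$ if there is $l''\le l'$ with $l\sim l''$. $\sim$ is regular if: (1) $l\sim 0\iff l=0$; (2) $l\ge l'$ and $l\le_\sim l'$ imply $l\sim l'$; (3) for all $l,l'$, $l\le_\sim l'$ or $l'\le_\sim l$; (4) if $(l_i)$, $(l_i')$ are families of mutually orthogonal elements with $l_i\sim l_i'$ for all $i$, then $\bigvee_i l_i\sim\bigvee_i l_i'$; (5) $l'\le l$ and $l'\sim l$ imply $l'=l$. A family $(l_i)_{i\in I}$ is independent if for every partition $\{J,K\}$ of $I$, $\bigvee_{i\in J}l_i\wedge\bigvee_{i\in K}l_i=0$. A $\sim$-compatible dimension function is a map $D:L\to[0,1]$ with $D(0)=0$, $D(1)=1$, $D(l\vee l')+D(l\wedge l')=D(l)+D(l')$, $D(l)=D(l')\iff l\sim l'$, $D(l)\le D(l')\iff l\le_\sim l'$, and $D(\bigvee_i l_i)=\sum_i D(l_i)$ for every finite or countable independent family. A factorial R-lattice $L$ is of type $I_n$ if it carries a regular equivalence relation $\sim$ and a $\sim$-compatible dimension function $D$ with $D(L)=\{0,\frac1n,\dots,\frac{n-1}{n},1\}$. A factorial $W^*$-lattice of type $I_n$ is a factorial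 R-lattice of type $I_n$ whose cardinality equals that of $\mathbb R$. *)

From Stdlib Require Import Reals List.
Open Scope R_scope.

(* Raw data of a (complete) orthocomplemented lattice: carrier, order,
   arbitrary suprema/infima of subsets, and the orthocomplement l |-> l^perp (= 1 - l). *)
Record OLat := {
  car  :> Type;
  le   : car -> car -> Prop;
  sup  : (car -> Prop) -> car;
  inf  : (car -> Prop) -> car;
  perp : car -> car
}.

Section Defs.
Variable L : OLat.

Definition join (a b : L) : L := sup L (fun x => x = a \/ x = b).
Definition meet (a b : L) : L := inf L (fun x => x = a \/ x = b).
Definition bot : L := inf L (fun _ => True).
Definition top : L := sup L (fun _ => True).
Definition bigsup {I : Type} (f : I -> L) : L := sup L (fun x => exists i, f i = x).
Definition biginf {I : Type} (f : I -> L) : L := inf L (fun x => exists i, f i = x).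
(* l - l' := (1 - l') /\ l  (used for l' <= l) *)
Definition lminus (l l' : L) : L := meet (perp L l') l.

Definition directed {I : Type} (r : I -> I -> Prop) : Prop :=
  inhabited I /\ (forall i, r i i) /\ (forall i j k, r i j -> r j k -> r i k) /\
  (forall i j, exists k, r i k /\ r j k).

Definition is_ocl : Prop :=
  (forall a, le L a a) /\
  (forall a b, le L a b -> le L b a -> a = b) /\
  (forall a b c, le L a b -> le L b c -> le L a c) /\
  (forall (S : L -> Prop), (forall x, S x -> le L x (sup L S)) /\
       (forall u, (forall x, S x -> le L x u) -> le L (sup L S) u)) /\
  (forall (S : L -> Prop), (forall x, S x -> le L (inf L S) x) /\
       (forall u, (forall x, S x -> le L u x) -> le L u (inf L S))) /\
  (forall (I : Type) (r : I -> I -> Prop) (f : I -> L), directed r ->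
      (forall i j, r i j -> le L (f i) (f j)) ->
      forall l, bigsup (fun i => meet l (f i)) = meet l (bigsup f)) /\
  (forall (I : Type) (r : I -> I -> Prop) (f : I -> L), directed r ->
      (forall i j, r i j -> le L (f j) (f i)) ->
      forall l, biginf (fun i => join l (f i)) = join l (biginf f)) /\
  (forall l l' l'', le L l l'' -> meet (join l l') l'' = join l (meet l' l'')) /\
  (forall l, perp L (perp L l) = l) /\
  (forall l, join l (perp L l) = top) /\
  (forall l, meet l (perp L l) = bot) /\
  (forall l l', le L l l' -> le L (perp L l') (perp L l)).

Definition orthogonal (l' l : L) : Prop := le L l' (perp L l).
Definition mutually_orthogonal {I : Type} (f : I -> L) : Prop :=
  forall i j, i <> j -> orthogonal (f i) (f j).

Definition commutes (l l' : L) : Prop := l = join (meet l l') (meet l (perp L l')).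
Definition center (c : L) : Prop := forall l, commutes c l.
Definition factorial : Prop := forall c, center c <-> (c = bot \/ c = top).

(* centre of the orthocomplemented lattice L /\ l (complement l' |-> l - l') *)
Definition center_below (l c : L) : Prop :=
  le L c l /\
  forall l', le L l' l -> c = join (meet c l') (meet c (lminus l l')).
Definition R_lattice : Prop :=
  forall l c, center_below l c <-> exists c0, center c0 /\ c = meet c0 l.

Definition minimal (m : L) : Prop :=
  m <> bot /\ forall l', meet m l' = bot \/ meet m l' = m.
Definition Min (l : L) (m : L) : Prop := minimal m /\ le L m l.

Definition le_sim (sim : L -> L -> Prop) (l l' : L) : Prop :=
  exists l'', le L l'' l' /\ sim l l''.
Definition regular (sim : L -> L -> Prop) : Prop :=
  (forall a, sim a a) /\ (forall a b, sim a b -> sim b a) /\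
  (forall a b c, sim a b -> sim b c -> sim a c) /\
  (forall l, sim l bot <-> l = bot) /\
  (forall l l', le L l' l -> le_sim sim l l' -> sim l l') /\
  (forall l l', le_sim sim l l' \/ le_sim sim l' l) /\
  (forall (I : Type) (f g : I -> L), mutually_orthogonal f -> mutually_orthogonal g ->
      (forall i, sim (f i) (g i)) -> sim (bigsup f) (bigsup g)) /\
  (forall l l', le L l' l -> sim l' l -> l' = l).

Definition independent {I : Type} (f : I -> L) : Prop :=
  forall J : I -> Prop,
    meet (sup L (fun x => exists i, J i /\ f i = x))
         (sup L (fun x => exists i, ~ J i /\ f i = x)) = bot.

End Defs.

(* sum of a family of nonnegative reals over an arbitrary index type:
   the least upper bound of the sums over finite subfamilies *)
Fixpoint sum_list {I : Type} (f : I -> R) (s : list I) : R :=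
  match s with nil => 0 | cons i s' => f i + sum_list f s' end.
Definition has_sum {I : Type} (f : I -> R) (s : R) : Prop :=
  is_lub (fun r => exists F : list I, NoDup F /\ r = sum_list f F) s.

Definition countable (I : Type) : Prop := exists g : I -> nat, forall i j, g i = g j -> i = j.

Definition dimension_function (L : OLat) (sim : L -> L -> Prop) (D : L -> R) : Prop :=
  (forall l, 0 <= D l <= 1) /\
  D (bot L) = 0 /\ D (top L) = 1 /\
  (forall l l', D (join L l l') + D (meet L l l') = D l + D l') /\
  (forall l l', D l = D l' <-> sim l l') /\
  (forall l l', D l <= D l' <-> le_sim L sim l l') /\
  (forall (I : Type) (f : I -> L), countable I -> independent L f ->
      has_sum (fun i => D (f i)) (D (bigsup L f))).

Definition type_In (L : OLat) (n : nat) : Prop :=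
  is_ocl L /\ factorial L /\ R_lattice L /\
  exists (sim : L -> L -> Prop) (D : L -> R),
    regular L sim /\ dimension_function L sim D /\
    (forall x, (exists l, D l = x) <-> exists k : nat, (k <= n)%nat /\ x = INR k / INR n).

Definition card_R (L : OLat) : Prop :=
  exists f : L -> R, (forall a b, f a = f b -> a = b) /\ (forall y, exists a, f a = y).

Definition W_lattice_type_In (L : OLat) (n : nat) : Prop := type_In L n /\ card_R L.

(* Call an orthocomplemented lattice atomic when every nonzero
   element lies above a minimal element.
   1. In every orthocomplemented lattice, modularity gives: if s <= l and
      s^perp /\ l = 0 then s = l.
   2. Hence in an atomic one, s := \/ Min(l) equals l: otherwise s^perp /\ l
      contains an atom x, which is then below both s and s^perp, i.e. x = 0.
      Part (b) follows: l <= l' is the inclusion Min(l) <= Min(l'), and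
      conversely l = \/ Min(l) <= l'.
   3. A lattice carrying a strictly monotone measure with values in a
      discrete set {k * step | k in N} is atomic (descend along proper
      nonzero parts; the level k strictly decreases).
   4. For type I_n the dimension function D is such a measure with
      step = 1/n: D is monotone and D z = D y forces z ~ y, hence z = y
      when z <= y, by regularity of ~. *)
From Stdlib Require Import Reals List.
From Stdlib Require Import Classical Wf_nat.
Open Scope R_scope.

Section OrthocomplementedLattice.
Variable L : OLat.

Definition atomic : Prop :=
  forall y : L, y <> bot L -> exists x, minimal L x /\ le L x y.

Lemma proper_part_of_nonminimal (y : L) :
  y <> bot L -> ~ minimal L y ->
  exists l', meet L y l' <> bot L /\ meet L y l' <> y.
Proof.
  intros Hy Hnmin.
  apply NNPP; intro Hnone; apply Hnmin; split; [exact Hy|].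
  intro l'.
  destruct (classic (meet L y l' = bot L)) as [Hb|Hb]; [now left|right].
  apply NNPP; intro Hne; apply Hnone; now exists l'.
Qed.

Hypothesis Hocl : is_ocl L.

Lemma lat_le_trans (a b c : L) : le L a b -> le L b c -> le L a c.
Proof. destruct Hocl as (_ & _ & Htrans & _); apply Htrans. Qed.

Lemma lat_le_antisym (a b : L) : le L a b -> le L b a -> a = b.
Proof. destruct Hocl as (_ & Hanti & _); apply Hanti. Qed.

Lemma sup_upper (S : L -> Prop) (x : L) : S x -> le L x (sup L S).
Proof. destruct Hocl as (_ & _ & _ & Hsup & _); apply (proj1 (Hsup S)). Qed.

Lemma sup_least (S : L -> Prop) (u : L) :
  (forall x, S x -> le L x u) -> le L (sup L S) u.
Proof. destruct Hocl as (_ & _ & _ & Hsup & _); apply (proj2 (Hsup S)). Qed.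

Lemma inf_lower (S : L -> Prop) (x : L) : S x -> le L (inf L S) x.
Proof. destruct Hocl as (_ & _ & _ & _ & Hinf & _); apply (proj1 (Hinf S)). Qed.

Lemma inf_greatest (S : L -> Prop) (u : L) :
  (forall x, S x -> le L u x) -> le L u (inf L S).
Proof. destruct Hocl as (_ & _ & _ & _ & Hinf & _); apply (proj2 (Hinf S)). Qed.

Lemma meet_le_l (a b : L) : le L (meet L a b) a.
Proof. apply inf_lower; now left. Qed.

Lemma meet_le_r (a b : L) : le L (meet L a b) b.
Proof. apply inf_lower; now right. Qed.

Lemma meet_greatest (a b u : L) : le L u a -> le L u b -> le L u (meet L a b).
Proof. intros Ha Hb; apply inf_greatest; now intros x [-> | ->]. Qed.

Lemma eq_of_perp_meet_bot (s l : L) :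
  le L s l -> meet L (perp L s) l = bot L -> s = l.
Proof.
  intros Hsl Hperp.
  destruct Hocl as (Hrefl & _ & _ & _ & _ & _ & _ & Hmod & _ & Hjp & _).
  assert (Htop : meet L (top L) l = l).
  { apply lat_le_antisym; [apply meet_le_r|].
    apply meet_greatest; [apply sup_upper; trivial | apply Hrefl]. }
  assert (Hbot : join L s (bot L) = s).
  { apply lat_le_antisym.
    - apply sup_least; intros x [-> | ->]; [apply Hrefl | apply inf_lower; trivial].
    - apply sup_upper; now left. }
  pose proof (Hmod s (perp L s) l Hsl) as Hm.
  rewrite Hjp, Htop, Hperp, Hbot in Hm.
  now symmetry.
Qed.

Lemma sup_Min_eq (Hatom : atomic) (l : L) : sup L (Min L l) = l.
Proof.
  set (s := sup L (Min L l)).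
  assert (Hsl : le L s l) by (apply sup_least; now intros x [_ Hx]).
  apply eq_of_perp_meet_bot; [exact Hsl|].
  apply NNPP; intro Hne.
  destruct (Hatom _ Hne) as [x [Hxmin Hx]].
  assert (Hxs : le L x s).
  { apply sup_upper; split; [exact Hxmin|].
    exact (lat_le_trans _ _ _ Hx (meet_le_r _ _)). }
  assert (Hxps : le L x (perp L s)) by exact (lat_le_trans _ _ _ Hx (meet_le_l _ _)).
  destruct Hocl as (_ & _ & _ & _ & _ & _ & _ & _ & _ & _ & Hmp & _).
  apply (proj1 Hxmin), lat_le_antisym.
  - rewrite <- (Hmp s); now apply meet_greatest.
  - apply inf_lower; trivial.
Qed.

Lemma le_iff_Min_incl (Hatom : atomic) (l l' : L) :
  le L l l' <-> (forall m, Min L l m -> Min L l' m).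
Proof.
  split.
  - intros Hll' m [Hm Hml]; split; [exact Hm | exact (lat_le_trans _ _ _ Hml Hll')].
  - intro Hincl; rewrite <- (sup_Min_eq Hatom l).
    apply sup_least; intros x Hx; apply (Hincl x Hx).
Qed.

(* Step 3: a strictly monotone measure with values in step * N forces
   atomicity, since passing to a proper nonzero part lowers the level. *)
Lemma atomic_of_discrete_measure (mu : L -> R) (step : R) :
  0 < step ->
  (forall y, exists k : nat, mu y = INR k * step) ->
  (forall z y, le L z y -> z <> y -> mu z < mu y) ->
  atomic.
Proof.
  intros Hstep Hlevel Hstrict y.
  destruct (Hlevel y) as [k Hk]; revert y Hk.
  induction k as [k IH] using (well_founded_induction lt_wf).
  intros y Hk Hy.
  destruct (classic (minimal L y)) as [Hmin|Hnmin].
  { exists y; split; [exact Hmin | apply Hocl]. }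
  destruct (proper_part_of_nonminimal y Hy Hnmin) as [l' [Hz Hzy]].
  set (z := meet L y l') in *.
  destruct (Hlevel z) as [j Hj].
  assert (Hjk : (j < k)%nat).
  { apply INR_lt, (Rmult_lt_reg_r step); [exact Hstep|].
    rewrite <- Hj, <- Hk; apply Hstrict; [apply meet_le_l | exact Hzy]. }
  destruct (IH j Hjk z Hj Hz) as [x [Hxmin Hxz]].
  exists x; split; [exact Hxmin | exact (lat_le_trans _ _ _ Hxz (meet_le_l _ _))].
Qed.

End OrthocomplementedLattice.

(* Step 4: a compatible dimension function for a regular equivalence is
   strictly monotone: D z = D y gives z ~ y, and z <= y, z ~ y imply z = y. *)
Lemma dimension_strict_mono (L : OLat) (sim : L -> L -> Prop) (D : L -> R) :
  regular L sim -> dimension_function L sim D ->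
  forall z y, le L z y -> z <> y -> D z < D y.
Proof.
  intros (Hsrefl & _ & _ & _ & _ & _ & _ & Hsub) (_ & _ & _ & _ & HDeq & HDle & _)
    z y Hzy Hne.
  destruct (Rle_lt_or_eq_dec (D z) (D y)) as [Hlt|Heq]; [| exact Hlt |].
  - apply HDle; now exists z.
  - exfalso; apply Hne, Hsub; [exact Hzy | now apply HDeq].
Qed.

Theorem mainTheorem16 (L : OLat) (n : nat) (hn : (1 <= n)%nat)
  (HL : W_lattice_type_In L n) :
  (forall l : L, sup L (Min L l) = l) /\
  (forall l l' : L, le L l l' <-> (forall m, Min L l m -> Min L l' m)).
Proof.
  destruct HL as [[Hocl [_ [_ [sim [D [Hreg [Hdim Hrange]]]]]]] _].
  assert (Hatom : atomic L).
  { apply (atomic_of_discrete_measure L Hocl D (/ INR n)).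
    - apply Rinv_0_lt_compat, lt_0_INR; exact hn.
    - intro y; destruct (proj1 (Hrange (D y)) (ex_intro _ y eq_refl)) as [k [_ Hk]].
      now exists k.
    - exact (dimension_strict_mono L sim D Hreg Hdim). }
  split.
  - exact (sup_Min_eq L Hocl Hatom).
  - exact (le_iff_Min_incl L Hocl Hatom).
Qed.
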